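(* Let $T$ be a p-string of length $n$ and let $1<i\le n$. Let $v_{i-1}$ be the node of $\mathrm{PPH}(T[i-1..])$ with id $i-1$ (the node inserted when passing from $\mathrm{PPH}(T[i..])$ to $\mathrm{PPH}(T[i-1..])$). Then in $\mathrm{PPH}(T[i-1..])$ there is no symbol $a\in\Sigma\cup\{0,\ldots,n-1\}$ for which $\mathrm{rslink}(a,v_{i-1})$ is defined.
   Context: Let $\Sigma$ and $\Pi$ be disjoint alphabets. A p-string is a finite string over $\Sigma\cup\Pi$. For a string $S$, $S[i]$ is its $i$-th character, $S[i..j]$ is the substring from position $i$ to $j$ (empty if $j<i$), and $S[i..]=S[i..|S|]$. The previous encoding $\mathrm{prev}(S)$ of a p-string $S$ of length $n$ is the sequence of length $n$ defined by: - $\mathrm{prev}(S)[i]=S[i]$ if $S[i]\in\Sigma$; - $\mathrm{prev}(S)[i]=0$ if $S[i]\in\Pi$ does not occur in $S[1..i-1]$; - $\mathrm{prev}(S)[i]=i-j$ otherwise, where $j<i$ is the largest position with $S[j]=S[i]$. Sequence hash tree. Let $\langle S_1,\ldots,S_k\rangle$ be a sequence of strings with $S_1=\varepsilon$ and with $S_i$ not a prefix of $S_j$ for any $j<i$. Its sequence hash tree is built as follows. Start from a root representing $\varepsilon$. For $i=2,\ldots,k$, insert as a new node the shortest prefix $p_i$ of $S_i$ that is not yet a node. Attach it as a child of the longest prefix $q_i$ of $S_i$ that is already a node, via an edge labeled $S_i[|q_i|+1]$. $\mathrm{PPH}(T[i..])$ is the sequence hash tree of $\langle\varepsilon,\mathrm{prev}(T[n..]),\ldots,\mathrm{prev}(T[i..])\rangle$.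 Nodes are identified with their root-to-node path labels, and $|v|$ is the length. The node with id $j$ is the node inserted for $\mathrm{prev}(T[j..])$. Reversed suffix links in a heap with nodes over $\Sigma\cup\{0,\ldots,n-1\}$ are defined as follows: - if $a\in\Sigma\cup\{0\}$ and $av$ is a node, then $\mathrm{rslink}(a,v)=av$; - if $a\in\{1,\ldots,n-1\}$, $v[a]=0$, and $0\,v[1..a-1]\,a\,v[a+1..|v|]$ is a node, then $\mathrm{rslink}(a,v)$ is that node; - otherwise $\mathrm{rslink}(a,v)$ is undefined. *)

From mathcomp Require Import all_boot.
Set Implicit Arguments. Unset Strict Implicit. Unset Printing Implicit Defensive.

Section PString.
Variables (Sigma Pi : eqType).

Definition pchar := (Sigma + Pi)%type.
Definition psym := (Sigma + nat)%type.

Definition prev_char (pre : seq pchar) (c : pchar) : psym :=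
  match c with
  | inl a => inl a
  | inr p => if inr p \in pre then inr (index (inr p) (rev pre)).+1 else inr 0
  end.

Fixpoint prev_aux (pre : seq pchar) (s : seq pchar) : seq psym :=
  match s with
  | [::] => [::]
  | c :: s' => prev_char pre c :: prev_aux (rcons pre c) s'
  end.

Definition prev (S : seq pchar) : seq psym := prev_aux [::] S.

(* T[i..] for 1-indexed i *)
Definition suffix (T : seq pchar) (i : nat) : seq pchar := drop i.-1 T.

(* Sequence hash tree, represented by its list of nodes (path labels) in
   insertion order; the root eps comes first.  The parent of a non-root node
   is the node obtained by deleting its last symbol, and the edge label is
   that last symbol, so the node list determines the tree. *)

(* shortest prefix of s that is not yet a node *)
Definition new_node (nodes : seq (seq psym)) (s : seq psym) : seq psym :=
  take (find (fun k => take k s \notin nodes) (iota 0 (size s).+1)) s.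

Definition sht_insert (nodes : seq (seq psym)) (s : seq psym) :=
  rcons nodes (new_node nodes s).

(* PPH(T[i..]) = sequence hash tree of <eps, prev(T[n..]), ..., prev(T[i..])> *)
Definition pph (T : seq pchar) (i : nat) : seq (seq psym) :=
  foldl sht_insert [:: [::]]
    [seq prev (suffix T j) | j <- rev (iota i (size T - i).+1)].

(* node with id j: inserted for prev(T[j..]) into PPH(T[j+1..]) *)
Definition node_id (T : seq pchar) (j : nat) : seq psym :=
  new_node (pph T j.+1) (prev (suffix T j)).

Definition rslink (nodes : seq (seq psym)) (n : nat) (a : psym) (v : seq psym)
  : option (seq psym) :=
  match a with
  | inl c => if (inl c :: v) \in nodes then Some (inl c :: v) else None
  | inr 0 => if (inr 0 :: v) \in nodes then Some (inr 0 :: v) else None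
  | inr k =>
      let w := inr 0 :: set_nth (inr 0) v k.-1 (inr k) in
      if [&& k < n, k <= size v, nth (inr 0) v k.-1 == inr 0 & w \in nodes]
      then Some w else None
  end.

End PString.

(** Let [slink w] be the suffix link of an encoded string: drop its first
    symbol and, if that symbol was [0] (a first occurrence of a parameter),
    reset to [0] the first later entry that pointed back to it.  Then
    [slink (prev S) = prev S[2..]], and [rslink(a, v)], whenever defined,
    is a node [w] with [|w| = |v| + 1] and [slink w = v].
    By downward induction on [i], [PPH(T[i..])] is closed under prefixes and
    under [slink]: the suffix link of the new node [prev(T[i..])[1..K]] is
    [prev(T[i+1..])[1..K-1]], a prefix of the node [v'] inserted just before,
    unless [v'] is shorter; but then [v'] is a prefix of the suffix link of
    the older node [prev(T[i..])[1..K-1]], so it would not have been new.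
    Finally, a node [w] of [PPH(T[i-1..])] with [slink w = v_(i-1)] and
    [|w| = |v_(i-1)| + 1] is not [v_(i-1)] itself, so it is older and
    [v_(i-1)] would already have been a node. *)

From Pilot Require Import Defs.
From mathcomp Require Import all_boot zify.
Set Implicit Arguments. Unset Strict Implicit. Unset Printing Implicit Defensive.

Lemma downward_ind2 (n : nat) (Q : nat -> Prop) :
  (forall j, n < j -> Q j) -> (forall j, j <= n -> Q j.+1 -> Q j.+2 -> Q j) ->
  forall j, Q j.
Proof.
move=> Qbig Qstep j; suff: forall d j, n.+1 - j <= d -> Q j by apply.
elim=> [|d IHd] {}j le_d; first by apply: Qbig; lia.
have [/Qbig //|le_jn] := ltnP n j.
by apply: Qstep => //; apply: IHd; lia.
Qed.

Section Encoding.
Variables (Sigma Pi : eqType).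
Local Notation psym := (psym Sigma).
Local Notation pchar := (pchar Sigma Pi).

(* [cut_ref u k] resets to [0] the first entry of [u] that points back
   exactly [k] positions before the start of [u]. *)
Fixpoint cut_ref (u : seq psym) (k : nat) : seq psym :=
  if u is x :: u' then
    if x == inr k then inr 0 :: u' else x :: cut_ref u' k.+1
  else [::].

Definition slink (w : seq psym) : seq psym :=
  match w with
  | [::] => [::]
  | inr 0 :: u => cut_ref u 1
  | _ :: u => u
  end.

Lemma cut_ref_take m (u : seq psym) k :
  cut_ref (take m u) k = take m (cut_ref u k).
Proof.
elim: u m k => [|x u IHu] [|m] k //=; rewrite ?take0 //.
by case: ifP => _ //=; rewrite IHu.
Qed.

Lemma slink_take m (w : seq psym) : slink (take m.+1 w) = take m (slink w).
Proof. by case: w => [|[a|[|k]] w] //=; rewrite cut_ref_take. Qed.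

Lemma cut_ref_id (v : seq psym) k :
  (forall p, nth (inr 0) v p != inr (k + p)) -> cut_ref v k = v.
Proof.
elim: v k => [|x v IHv] k no_ref //=.
move: (no_ref 0); rewrite addn0 => /negbTE ->; congr (_ :: _).
by apply: IHv => p; move: (no_ref p.+1); rewrite addSnnS.
Qed.

Lemma cut_ref_set_nth (v : seq psym) k q :
  (forall p, nth (inr 0) v p != inr (k + p)) -> q < size v ->
  nth (inr 0) v q = inr 0 -> cut_ref (set_nth (inr 0) v q (inr (k + q))) k = v.
Proof.
elim: v k q => [|x v IHv] k [|q] no_ref //= lt_q.
  by rewrite addn0 eqxx => <-.
move: (no_ref 0); rewrite addn0 => /negbTE -> v_q; congr (_ :: _).
by rewrite -addSnnS IHv // => p; move: (no_ref p.+1); rewrite addSnnS.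
Qed.

Lemma size_prev_aux (pre s : seq pchar) : size (prev_aux pre s) = size s.
Proof. by elim: s pre => [|c s IHs] pre //=; rewrite IHs. Qed.

Lemma prev_char_cons_neq (c d : pchar) (pre : seq pchar) :
  d != c -> prev_char (c :: pre) d = prev_char pre d.
Proof.
case: d => [a|p] //= ne_dc.
rewrite in_cons rev_cons -cats1 index_cat mem_rev (negbTE ne_dc) /=.
by case: (inr p \in pre).
Qed.

Lemma prev_aux_cons_seen (c : pchar) (pre s : seq pchar) :
  (c \in pre) || (if c is inl _ then true else false) ->
  prev_aux (c :: pre) s = prev_aux pre s.
Proof.
elim: s pre => [|d s IHs] pre seen_c //=.
rewrite IHs; last by rewrite mem_rcons in_cons; case/orP: seen_c => ->; rewrite !orbT.
congr (_ :: _); have [->|/prev_char_cons_neq //] := eqVneq d c.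
clear IHs; case: c seen_c => [a|p] //=; rewrite orbF => p_pre.
by rewrite in_cons eqxx rev_cons -cats1 index_cat !mem_rev p_pre.
Qed.

Lemma nth_prev_aux_neq (pre s : seq pchar) p :
  nth (inr 0) (prev_aux pre s) p != inr (size pre + p).+1.
Proof.
elim: s pre p => [|d s IHs] pre [|p] /=; rewrite ?nth_nil //.
  case: d => [a|q] //=; case: ifP => // q_pre; rewrite addn0.
  by apply/eqP => -[idx]; move: q_pre; rewrite -mem_rev -index_mem idx size_rev ltnn.
by move: (IHs (rcons pre d) p); rewrite size_rcons addSnnS.
Qed.

Lemma cut_ref_prev_aux (p : Pi) (pre s : seq pchar) : inr p \notin pre ->
  cut_ref (prev_aux (inr p :: pre) s) (size pre).+1 = prev_aux pre s.
Proof.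
elim: s pre => [|d s IHs] pre p_pre //=.
have [->|ne_dp] := eqVneq d (inr p).
  rewrite /= in_cons eqxx rev_cons -cats1 index_cat mem_rev (negbTE p_pre).
  rewrite /= eqxx size_rev addn0 eqxx; congr (_ :: _).
  by apply: prev_aux_cons_seen; rewrite mem_rcons in_cons eqxx.
rewrite prev_char_cons_neq //.
have := nth_prev_aux_neq pre (d :: s) 0; rewrite addn0 /= => /negbTE ->.
congr (_ :: _); rewrite -(size_rcons pre d) IHs //.
by rewrite mem_rcons in_cons negb_or eq_sym ne_dp.
Qed.

Lemma slink_prev (s : seq pchar) : slink (Defs.prev s) = Defs.prev (behead s).
Proof.
case: s => [|[a|p] s] //; rewrite /Defs.prev /=; first exact: prev_aux_cons_seen.
exact: (@cut_ref_prev_aux p [::]).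
Qed.

Lemma new_nodeP (nodes : seq (seq psym)) s :
  [::] \in nodes -> s \notin nodes ->
  exists K, [/\ new_node nodes s = take K s, 0 < K, K <= size s,
    new_node nodes s \notin nodes & forall k, k < K -> take k s \in nodes].
Proof.
move=> root_in s_out; set fresh := fun k => take k s \notin nodes.
have has_fresh : has fresh (iota 0 (size s).+1).
  by apply/hasP; exists (size s); rewrite /fresh ?take_size ?mem_iota ?ltnSn.
have := has_fresh; rewrite has_find size_iota ltnS => le_K.
have := nth_find 0 has_fresh; rewrite nth_iota ?ltnS // add0n => fresh_K.
exists (find fresh (iota 0 (size s).+1)); split => //.
- by move: fresh_K; case: find => //; rewrite /fresh take0 root_in.
- move=> k lt_k; have := before_find 0 lt_k.
  by rewrite nth_iota ?add0n => [/negbFE|]; last by rewrite ltnS; lia.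
Qed.

Lemma rslink_slink nodes m a v w :
  (forall p, nth (inr 0) v p != inr p.+1) -> rslink nodes m a v = Some w ->
  [/\ w \in nodes, size w = (size v).+1 & slink w = v].
Proof.
move=> no_ref; case: a => [c|[|k]] /=; first by case: ifP => // ? [<-].
  by case: ifP => // ? [<-]; rewrite /= cut_ref_id.
case: ifP => // /and4P[_ le_k /eqP v_k w_in] [<-]; split => //=.
  by rewrite size_set_nth; congr _.+1; apply/maxn_idPr.
by rewrite -add1n cut_ref_set_nth // ?add1n.
Qed.

End Encoding.

Section PositionHeap.
Variables (Sigma Pi : eqType) (T : seq (pchar Sigma Pi)).
Local Notation n := (size T).
Local Notation P j := (Defs.prev (Defs.suffix T j)).
Local Notation N j := (pph T j).

Definition heap_closed (nodes : seq (seq (psym Sigma))) :=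
  [/\ [::] \in nodes, forall u m, u \in nodes -> take m u \in nodes
    & forall u, u \in nodes -> slink u \in nodes].

Lemma slink_prev_suffix j : 0 < j -> slink (P j) = P j.+1.
Proof. by move=> j_gt0; rewrite slink_prev /Defs.suffix -drop1 drop_drop add1n prednK. Qed.

Lemma size_prev_suffix j : size (P j) = n - j.-1.
Proof. by rewrite /Defs.prev size_prev_aux size_drop. Qed.

(* Beyond the end, [prev(T[j..])] is empty and is inserted as a second root. *)
Lemma pph_oversize j : n < j -> N j = [:: [::]; [::]].
Proof.
move=> lt_nj; rewrite /pph (_ : n - j = 0); last by lia.
by rewrite /= /Defs.suffix drop_oversize //; lia.
Qed.

Lemma mem_pph j u : j <= n ->
  (u \in N j) = (u \in N j.+1) || (u == node_id T j).
Proof.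
move=> le_jn; have [lt_jn|le_nj] := ltnP j n.
  rewrite /pph (_ : n - j = (n - j.+1).+1); last by lia.
  by rewrite /= rev_cons map_rcons foldl_rcons mem_rcons in_cons orbC.
have -> : j = n by lia.
rewrite /node_id (pph_oversize (j := n.+1)) // /pph subnn /= /new_node.
rewrite (eq_find (a2 := fun k => take k (P n) \notin [:: [::]])); last first.
  by move=> k; rewrite !inE orbb.
by rewrite !inE orbb.
Qed.

Lemma size_mem_pph j u : 0 < j -> u \in N j -> size u <= n - j.-1.
Proof.
elim/(@downward_ind2 n): j u => [j lt_nj|j le_jn IH1 _] u j_gt0.
  by rewrite pph_oversize // !inE orbb => /eqP ->.
rewrite mem_pph // => /orP[/IH1 /= le_u|/eqP ->]; first by lia.
by rewrite /node_id /new_node size_take_min size_prev_suffix geq_minr.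
Qed.

Lemma node_idP j : 0 < j <= n -> [::] \in N j.+1 ->
  exists K, [/\ node_id T j = take K (P j), 0 < K, K <= size (P j),
    node_id T j \notin N j.+1 & forall k, k < K -> take k (P j) \in N j.+1].
Proof.
move=> /andP[j_gt0 le_jn] root_in; apply: new_nodeP => //.
by apply/negP => /size_mem_pph /= /(_ isT); rewrite size_prev_suffix; lia.
Qed.

Lemma mem_slink_node_id j : 0 < j <= n ->
  heap_closed (N j.+1) -> heap_closed (N j.+2) -> slink (node_id T j) \in N j.+1.
Proof.
move=> jP [root1 take1 _] [root2 take2 slink2]; have /andP[j_gt0 le_jn] := jP.
have [K [-> K_gt0 le_K _ short_in]] := node_idP jP root1.
rewrite -(prednK K_gt0) slink_take slink_prev_suffix //.
have [lt_jn|le_nj] := ltnP j n; last first.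
  by rewrite /Defs.suffix drop_oversize //=; lia.
have j1P : 0 < j.+1 <= n by rewrite lt_jn.
have [K' [v'E _ _ v'_new _]] := node_idP j1P root2.
have [le_KK'|lt_K'K] := leqP K.-1 K'.
  by rewrite -(take_takel _ le_KK') -v'E take1 // mem_pph // eqxx orbT.
(* Otherwise the prefix of length [K-1] is older than [v' = node_id T j.+1],
   and [v'] is a prefix of its suffix link, so [v'] would be older too. *)
have := short_in K.-1; rewrite prednK // => /(_ (ltnSn _)).
rewrite mem_pph // => /orP[old|/eqP/(congr1 size)]; last first.
  rewrite size_prev_suffix in le_K.
  by rewrite v'E !size_take_min !size_prev_suffix; lia.
move: (slink2 _ old); rewrite (_ : K.-1 = K.-2.+1); last by lia.
rewrite slink_take slink_prev_suffix // => /(take2 _ K').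
by rewrite take_takel -?v'E ?(negbTE v'_new) //; lia.
Qed.

Lemma pph_closed j : 0 < j -> heap_closed (N j).
Proof.
elim/(@downward_ind2 n): j => [j lt_nj _|j le_jn IH1 IH2 j_gt0].
  by rewrite pph_oversize //; split=> [|u m|u]; rewrite ?inE ?orbb // => /eqP ->.
have jP : 0 < j <= n by rewrite j_gt0.
have [root1 take1 slink1] := IH1 isT.
have [K [vE _ le_K _ short_in]] := node_idP jP root1.
split=> [|u m|u]; rewrite !(mem_pph _ le_jn).
- by rewrite root1.
- case/orP=> [/take1 -> //|/eqP ->].
  have [le_Km|lt_mK] := leqP K m.
    by rewrite take_oversize ?eqxx ?orbT // vE size_takel.
  by rewrite vE take_takel ?short_in // ltnW.
- case/orP=> [/slink1 -> //|/eqP ->].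
  by rewrite (mem_slink_node_id jP (IH1 isT) (IH2 isT)).
Qed.

Lemma nth_node_id_neq j : 0 < j <= n ->
  forall p, nth (inr 0) (node_id T j) p != inr p.+1.
Proof.
move=> jP p; have [root1 _ _] := pph_closed (isT : 0 < j.+1).
have [K [-> _ _ _ _]] := node_idP jP root1.
have [lt_pK|le_Kp] := ltnP p K.
  by rewrite nth_take //; exact: (@nth_prev_aux_neq _ _ [::]).
by rewrite nth_default // size_take_min geq_min le_Kp.
Qed.

Lemma no_slink_preimage j w : 0 < j <= n -> w \in N j ->
  size w = (size (node_id T j)).+1 -> slink w != node_id T j.
Proof.
move=> jP; rewrite mem_pph ?(andP jP).2 // => /orP[old _|/eqP -> /n_Sn //].
have [root1 _ slink1] := pph_closed (isT : 0 < j.+1).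
have [_ [_ _ _ new _]] := node_idP jP root1.
by apply: contraNneq new => <-; apply: slink1.
Qed.

End PositionHeap.

Theorem lemma6 (Sigma Pi : eqType) (T : seq (pchar Sigma Pi)) (i : nat) :
  1 < i <= size T ->
  forall a : psym Sigma,
    (match a with inl _ => True | inr k => k < size T end) ->
    rslink (pph T i.-1) (size T) a (node_id T i.-1) = None.
Proof.
move=> /andP[lt_1i le_in] a _.
have jP : 0 < i.-1 <= size T by apply/andP; split; lia.
case E: rslink => [w|] //.
have [w_in size_w slink_w] := rslink_slink (nth_node_id_neq jP) E.
by move: (no_slink_preimage jP w_in size_w); rewrite slink_w eqxx.
Qed.
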